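(* Let $p(x)$ be a probability distribution on a feature space $\mathcal X$, let $p_{\mathrm{CM}}(y\mid x)$, $y\in\{+1,-1\}$, be a conditional probability distribution, and let $\mathcal D_{\mathrm{CM}}=p(x)\,p_{\mathrm{CM}}(y\mid x)$ be the induced joint distribution of $(x,y)$. Let $r(y,x,\theta)$ be a measurable risk function with $0\le r(y,x,\theta)\le 1$ for all $y,x$ and a fixed parameter $\theta$, and write $r_1(x)=r(+1,x,\theta)$, $r_2(x)=r(-1,x,\theta)$. Then for every constant $c>0$, $$\Big(\mathbb E_{\mathcal D_{\mathrm{CM}}}\big[\mathbf 1_{r(y,x,\theta)>r(-y,x,\theta)}\big]\Big)^2\le \mathbb E_{p(x)}\Big[c\,p_{\mathrm{CM}}(+1\mid x)\,r_1(x)+c\,p_{\mathrm{CM}}(-1\mid x)\,r_2(x)+\log\big(1+e^{-c|r_1(x)-r_2(x)|}\big)+2e^{-2c|r_1(x)-r_2(x)|}\Big].$$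
   Context: Binary classification with labels $y\in\{+1,-1\}$. The left-hand side is the misclassification error, under data distributed as $\mathcal D_{\mathrm{CM}}$, of the classifier that predicts $\mathrm{argmin}_{y\in\{\pm1\}} r(y,x,\theta)$. *)

From HB Require Import structures.
From mathcomp Require Import all_boot all_order all_algebra.
From mathcomp Require Import all_classical all_reals all_analysis.
Set Implicit Arguments. Unset Strict Implicit. Unset Printing Implicit Defensive.
Import Order.TTheory GRing.Theory Num.Theory.
Local Open Scope ring_scope.
Local Open Scope ereal_scope.

(* Labels: y : bool, with [true] = +1 and [false] = -1; [negb] is y |-> -y. *)

(* Expectation of g(x,y) under the joint law D_CM = p(x) p_CM(y|x), where the
   conditional law is given by eta x = p_CM(+1|x) (so p_CM(-1|x) = 1 - eta x):
   E_{D_CM}[g] = \int p(dx) (p_CM(+1|x) g(x,+1) + p_CM(-1|x) g(x,-1)). *)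
Definition E_CM (d : measure_display) (T : measurableType d) (R : realType)
  (P : probability T R) (eta : T -> R) (g : T -> bool -> R) : \bar R :=
  \int[P]_x ((eta x * g x true + (1 - eta x) * g x false)%R)%:E.

Definition miscl_ind (T Theta : Type) (R : realType)
  (r : bool -> T -> Theta -> R) (theta : Theta) (x : T) (y : bool) : R :=
  if (r (~~ y) x theta < r y x theta)%R then 1%R else 0%R.

(* Pointwise, the misclassification probability at x is p = p_CM(y|x) for
   the label y the classifier gets wrong, which can only happen when the
   margin t = c |r_1(x) - r_2(x)| is positive; then p <= p t + 2 e^(-2t),
   because e^(-2t) >= (1 - t/2)^4 and 2 s^4 >= 2 s - 1, and p t is at most
   the c p r term of the wrong label (the logarithm is merely nonnegative).
   Integrating bounds the error E, and E^2 <= E since E <= 1. *)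
From HB Require Import structures.
From mathcomp Require Import all_boot all_order all_algebra.
From mathcomp Require Import all_classical all_reals all_analysis.
From mathcomp Require Import ring lra.
Set Implicit Arguments. Unset Strict Implicit. Unset Printing Implicit Defensive.
Import Order.TTheory GRing.Theory Num.Theory.
Local Open Scope ring_scope.

Lemma two_mul_sub1_le_2expr4 (R : realFieldType) (s : R) :
  2 * s - 1 <= 2 * s ^+ 4.
Proof.
have -> : s ^+ 4 = (s ^+ 2) ^+ 2 by rewrite -exprM.
have := sqr_ge0 (s ^+ 2 - 2 / 5); have := sqr_ge0 (s - 5 / 8); nra.
Qed.

Lemma le_mulr_add_2expR (R : realType) (a t : R) : 0 <= a <= 1 -> 0 <= t ->
  a <= a * t + 2 * expR (- 2 * t).
Proof.
move=> /andP[a0 a1] t0; have e0 := expR_ge0 (- 2 * t).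
have [t_ge1|t_lt1] := leP 1 t; first nra.
have s0 : 0 <= 1 - t / 2 by lra.
have s_le : 1 - t / 2 <= expR (- t / 2).
  by have := expR_ge1Dx (- t / 2); rewrite mulNr.
have -> : expR (- 2 * t) = expR (- t / 2) ^+ 4.
  by rewrite -expRM_natl; congr expR; lra.
have := two_mul_sub1_le_2expr4 (1 - t / 2).
have : (1 - t / 2) ^+ 4 <= expR (- t / 2) ^+ 4.
  by rewrite lerXn2r ?nnegrE ?expR_ge0.
nra.
Qed.

Lemma le_margin_risk_2expR (R : realType) (a c u v : R) :
  0 <= a <= 1 -> 0 < c -> 0 <= v -> v < u ->
  a <= c * a * u + 2 * expR (- (2 * c) * `|u - v|).
Proof.
move=> a01 c0 v0 vu; have /andP[a0 _] := a01.
have t0 : 0 <= c * (u - v) by rewrite mulr_ge0 ?subr_ge0 // ltW.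
have := le_mulr_add_2expR a01 t0.
have cav : 0 <= c * a * v by rewrite !mulr_ge0 // ltW.
have -> : - (2 * c) * `|u - v| = - 2 * (c * (u - v)).
  by rewrite gtr0_norm ?subr_gt0 //; ring.
nra.
Qed.

Lemma misclassification_le_surrogate (R : realType) (a r1 r2 c : R) :
  0 <= a <= 1 -> 0 <= r1 -> 0 <= r2 -> 0 < c ->
  a * (if r2 < r1 then 1 else 0) + (1 - a) * (if r1 < r2 then 1 else 0) <=
  c * a * r1 + c * (1 - a) * r2 + ln (1 + expR (- c * `|r1 - r2|))
  + 2 * expR (- (2 * c) * `|r1 - r2|).
Proof.
move=> a01 r10 r20 c0; have /andP[a0 a1] := a01.
have ln0 : 0 <= ln (1 + expR (- c * `|r1 - r2|)).
  by rewrite ln_ge0 // lerDl expR_ge0.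
have e0 := expR_ge0 (- (2 * c) * `|r1 - r2|).
have car1 : 0 <= c * a * r1 by rewrite !mulr_ge0 // ltW.
have car2 : 0 <= c * (1 - a) * r2 by rewrite !mulr_ge0 ?subr_ge0 // ltW.
case: ifP => r21; case: ifP => r12.
- by move: (lt_trans r21 r12); rewrite ltxx.
- have := le_margin_risk_2expR a01 c0 r20 r21; lra.
- have a01' : 0 <= 1 - a <= 1 by lra.
  have := le_margin_risk_2expR a01' c0 r10 r12; rewrite distrC; lra.
- lra.
Qed.

Local Open Scope ereal_scope.

(* No measurability is needed: the integral of a nonnegative function is the
   supremum of the integrals of the simple functions below it. *)
Lemma ge0_le_integralT d (T : measurableType d) (R : realType)
    (mu : {measure set T -> \bar R}) (f g : T -> \bar R) :
  (forall x, 0 <= f x) -> (forall x, f x <= g x) ->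
  \int[mu]_x f x <= \int[mu]_x g x.
Proof.
move=> f0 fg; have g0 x : 0 <= g x by exact: le_trans (fg x).
rewrite !ge0_integralE //.
apply: ereal_sup_le => _ [h hf <-]; exists h => // x.
by apply: le_trans (hf x) _; rewrite /patch /=; case: ifP.
Qed.

Lemma probability_integral_sqr_le d (T : measurableType d) (R : realType)
    (P : probability T R) (f : T -> \bar R) :
  (forall x, 0 <= f x <= 1) -> (\int[P]_x f x) ^+ 2 <= \int[P]_x f x.
Proof.
move=> f01; have f0 x : 0 <= f x by have /andP[] := f01 x.
have E0 : 0 <= \int[P]_x f x by exact: integral_ge0.
have E1 : \int[P]_x f x <= 1.
  have := @ge0_le_integralT _ _ _ P f (cst 1) f0 (fun x => proj2 (andP (f01 x))).
  by rewrite integral_cst //= probability_setT mul1e.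
by rewrite expe2 -{3}[\int[P]_x f x]mul1e; exact: lee_pmul.
Qed.

Theorem theorem1 (d : measure_display) (T : measurableType d) (R : realType)
  (P : probability T R) (eta : T -> R)
  (Theta : Type) (r : bool -> T -> Theta -> R) (theta : Theta) (c : R) :
  measurable_fun setT eta ->
  (forall x, (0 <= eta x <= 1)%R) ->
  (forall y, measurable_fun setT (fun x => r y x theta)) ->
  (forall y x, (0 <= r y x theta <= 1)%R) ->
  (0 < c)%R ->
  (E_CM P eta (miscl_ind r theta)) ^+ 2 <=
  \int[P]_x
    ((c * eta x * r true x theta + c * (1 - eta x) * r false x theta
      + ln (1 + expR (- c * `|r true x theta - r false x theta|))
      + 2 * expR (- (2 * c) * `|r true x theta - r false x theta|))%R)%:E.
Proof.
move=> _ eta01 _ r01 c0; rewrite /E_CM /miscl_ind /=.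
have r0 y x : (0 <= r y x theta)%R by have /andP[] := r01 y x.
apply: le_trans (probability_integral_sqr_le _ _) _.
  move=> x; rewrite !lee_fin; have := eta01 x.
  by case: ifP; case: ifP => _ _; lra.
apply: ge0_le_integralT => x; rewrite lee_fin.
  by have := eta01 x; case: ifP; case: ifP => _ _; lra.
exact: misclassification_le_surrogate.
Qed.
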